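(* Let $T$ be a monoidal signature with valuation $v$, and suppose the synthesis procedure described in the context is run successively for a sequence of size parameters $(M_1,N_1,P_1,Q_1),(M_2,N_2,P_2,Q_2),\dots$, producing (after all runs) a set of reductions $\mathbb S$ and a set of congruences $\mathbb K$. Then for every $i$ and all string graphs $G,H$ of size $(M_i,N_i,P_i,Q_i)$ with $\llbracket G\rrbracket=\llbracket H\rrbracket$, the graphs $G$ and $H$ are equivalent under the equivalence relation generated by rewriting with $\mathbb S\cup\mathbb K$ (together with isomorphism). Moreover, if $\mathbb K=\emptyset$, then every such $G$ has a unique normal form with respect to $\mathbb S$ (up to isomorphism), and $\llbracket G\rrbracket=\llbracket H\rrbracket$ implies that $G$ and $H$ have isomorphic $\mathbb S$-normal forms.
   Context: String graphs over a monoidal signature $T=(\mathcal O,\mathcal M,\mathrm{dom},\mathrm{cod})$: finite directed graphs with node-vertices labelled by morphisms $f\in\mathcal M$ and wire-vertices labelled by objects in $\mathcal O$, edges (possibly typed $\mathrm{in}_i,\mathrm{out}_j$) each incident to at least one wire-vertex, each wire-vertex having at most one in-edge and one out-edge, labelling consistent with $\mathrm{dom},\mathrm{cod}$. Inputs $\mathrm{In}(G)$ are wire-vertices with no in-edge, outputs $\mathrm{Out}(G)$ those with no out-edge, $\mathrm{Bound}(G)=\mathrm{In}(G)\cup\mathrm{Out}(G)$. The plugging $G/_{(x,y)}$ ($x\in\mathrm{In}(G)$, $y\in\mathrm{Out}(G)$) identifies $x$ and $y$. A generator is, for $f\in\mathcal M$, the smallest string graph containing one node-vertex of type $f$ (one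 wire-vertex on each of its input and output edges), or the identity generator (two wire-vertices joined by an edge). A string graph has size $(M,N,P,Q)$ if it has $M$ inputs, $N$ outputs, at most $Q$ node-vertices, and is obtained from a disjoint union of generators by at most $P$ pluggings. A string graph rewrite rule $L\to R$ is a span of monomorphisms $L\leftarrow B\rightarrow R$ with $B$ discrete, mapping onto $\mathrm{Bound}(L)$ and $\mathrm{Bound}(R)$ and preserving which boundary points are inputs. A matching $m:L\to G$ is a monomorphism such that any edge of $G$ outside the image of $m$ that is adjacent to $m(v)$ has $v\in\mathrm{Bound}(L)$. Rewriting $G\to H$ with a rule and matching is double-pushout rewriting (remove the interior of $m(L)$, glue $R$ in along the boundary); for a set of rules $\mathbb S$, a graph is $\mathbb S$-irreducible (a normal form) if no rule of $\mathbb S$ matches it. A valuation $v$ assigns to each $o\in\mathcal O$ a finite-dimensional complex vector space and to each $f\in\mathcal M$ a linear map $v(f)$ from the tensor product of its input spaces to that of its output spaces; $\llbracket G\rrbracket$ is the linear map obtained by tensor contraction (node-vertices as $v(f)$, wire-vertices as identities, edges as contracted indices). Synthesis procedure: it is given an initial set $\mathbb S$ of rewrite rules in which every generator is $\mathbb S$-irreducible, and a function $\kappa$ from string graphs to $\mathbb N$ with $G\cong H\Rightarrow\kappa(G)=\kappa(H)$, $G\to_{\mathbb S}H\Rightarrow \kappa(G)>\kappa(H)$ (this property is maintained for all rules ever added), and such that rewriting with rules of $\mathbb S$ never increases the size of a graph (number of inputs/outputs fixed, node-vertices and pluggings non-increasing). Initially $\mathbb K=\emptyset$. A run with parameters $(M,N,P,Q)$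 enumerates (up to isomorphism) all string graphs of size $(M,N,P,Q)$ that are irreducible with respect to the current $\mathbb S$, partitions them into classes $C$ of graphs with equal evaluation $\llbracket\cdot\rrbracket$, and for each class $C$ takes the set $C'\subseteq C$ of $\kappa$-minimal elements, chooses $G_0\in C'$, adds to $\mathbb S$ the rules $G\to G_0$ for all $G\in C\setminus C'$, and adds to $\mathbb K$ the rules $G'\to G_0$ and $G_0\to G'$ for all $G'\in C'\setminus\{G_0\}$. Runs are performed in sequence, each using the $\mathbb S$ produced by the previous runs.
   Formalization: Each initial rule L → R of 𝕊 is also sound for the valuation v, that is ⟦L⟧ = ⟦R⟧ with the same boundary types on both sides. The statement above fails without it. *)

From HB Require Import structures.
From mathcomp Require Import all_boot all_order all_algebra.
From Stdlib Require Import Relations.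
Set Implicit Arguments. Unset Strict Implicit. Unset Printing Implicit Defensive.
Import GRing.Theory Num.Theory.

Record signature := Signature {
  sObj : Type;
  sMor : Type;
  sdom : sMor -> seq sObj;
  scod : sMor -> seq sObj }.

(* edge types: untyped (wire-wire), in_i, out_j *)
Definition ekind := option (bool * nat).
Notation EPlain := (@None (bool * nat)).
Notation EIn i := (Some (true, i)).
Notation EOut j := (Some (false, j)).

(* finite directed (multi)graphs with vertices labelled by objects (wire-vertices)
   or morphisms (node-vertices) and typed edges *)
Record graph (T : signature) := Graph {
  gV : finType;
  gE : finType;
  vlab : gV -> sObj T + sMor T;
  esrc : gE -> gV;
  etgt : gE -> gV;
  ekd : gE -> ekind }.
Arguments vlab {T g}. Arguments esrc {T g}. Arguments etgt {T g}. Arguments ekd {T g}.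

Section Graphs.
Variable T : signature.

Definition is_wire (G : graph T) (v : gV G) : bool := if vlab v is inl _ then true else false.

Definition edge_ok (G : graph T) (e : gE G) : Prop :=
  match vlab (esrc e), vlab (etgt e) with
  | inl a, inl b => a = b /\ ekd e = EPlain
  | inl a, inr f => exists i, ekd e = EIn i /\ i < size (sdom f) /\ nth a (sdom f) i = a
  | inr f, inl b => exists j, ekd e = EOut j /\ j < size (scod f) /\ nth b (scod f) j = b
  | inr _, inr _ => False
  end.

Definition is_string_graph (G : graph T) : Prop :=
  (forall e : gE G, is_wire (esrc e) \/ is_wire (etgt e)) /\
  (forall w : gV G, is_wire w -> forall e1 e2, etgt e1 = w -> etgt e2 = w -> e1 = e2) /\
  (forall w : gV G, is_wire w -> forall e1 e2, esrc e1 = w -> esrc e2 = w -> e1 = e2) /\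
  (forall e : gE G, edge_ok e) /\
  (forall (v : gV G) f, vlab v = inr f ->
     (forall i, i < size (sdom f) -> exists! e, etgt e = v /\ ekd e = EIn i) /\
     (forall j, j < size (scod f) -> exists! e, esrc e = v /\ ekd e = EOut j)).

Definition is_input (G : graph T) (v : gV G) : bool := is_wire v && [forall e : gE G, etgt e != v].
Definition is_output (G : graph T) (v : gV G) : bool := is_wire v && [forall e : gE G, esrc e != v].
Definition is_bound (G : graph T) (v : gV G) : bool := is_input v || is_output v.

Definition ghom (G H : graph T) (fv : gV G -> gV H) (fe : gE G -> gE H) : Prop :=
  (forall v, vlab (fv v) = vlab v) /\
  (forall e, esrc (fe e) = fv (esrc e) /\ etgt (fe e) = fv (etgt e) /\ ekd (fe e) = ekd e).

Definition giso (G H : graph T) : Prop :=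
  exists (fv : gV G -> gV H) (fe : gE G -> gE H),
    bijective fv /\ bijective fe /\ ghom fv fe.

Definition empty_graph : graph T :=
  @Graph T void void (fun v => match v with end) (fun e => match e with end)
    (fun e => match e with end) (fun e => match e with end).

Definition dunion (G H : graph T) : graph T :=
  @Graph T (gV G + gV H)%type (gE G + gE H)%type
    (fun v => match v with inl x => vlab x | inr y => vlab y end)
    (fun e => match e with inl x => inl (esrc x) | inr y => inr (esrc y) end)
    (fun e => match e with inl x => inl (etgt x) | inr y => inr (etgt y) end)
    (fun e => match e with inl x => ekd x | inr y => ekd y end).

Definition id_gen (a : sObj T) : graph T :=
  @Graph T bool unit (fun _ => inl a) (fun _ => false) (fun _ => true) (fun _ => EPlain).

(* generator of f: one node-vertex (None), one wire-vertex per input and output *)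
Definition mor_gen (f : sMor T) : graph T :=
  @Graph T (option ('I_(size (sdom f)) + 'I_(size (scod f))))%type
           ('I_(size (sdom f)) + 'I_(size (scod f)))%type
    (fun v => match v with
              | None => inr f
              | Some (inl i) => inl (tnth (in_tuple (sdom f)) i)
              | Some (inr j) => inl (tnth (in_tuple (scod f)) j) end)
    (fun e => match e with inl i => Some (inl i) | inr _ => None end)
    (fun e => match e with inl _ => None | inr j => Some (inr j) end)
    (fun e => match e with inl i => EIn (val i) | inr j => EOut (val j) end).

Definition generator (g : sObj T + sMor T) : graph T :=
  match g with inl a => id_gen a | inr f => mor_gen f end.

Definition gen_union (gs : seq (sObj T + sMor T)) : graph T :=
  foldr (fun g acc => dunion (generator g) acc) empty_graph gs.

(* plugging G/(x,y): identify x and y (y is removed, its edges redirected to x) *)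
Definition plug (G : graph T) (x y : gV G) (hxy : x != y) : graph T :=
  let r := fun v : gV G => insubd (exist (fun w => w != y) x hxy) v in
  @Graph T {w : gV G | w != y} (gE G)
    (fun w => vlab (val w)) (fun e => r (esrc e)) (fun e => r (etgt e)) (@ekd T G).

Inductive built : nat -> graph T -> Prop :=
| built_gens (gs : seq (sObj T + sMor T)) : built 0 (gen_union gs)
| built_plug k (G : graph T) (x y : gV G) (hxy : x != y) :
    built k G -> is_input x -> is_output y -> built k.+1 (plug hxy).

Record fsgraph := FSGraph {
  fg :> graph T;
  nin : nat;
  nout : nat;
  finp : 'I_nin -> gV fg;
  fout : 'I_nout -> gV fg }.

Definition inp_at (G : fsgraph) (i : nat) : option (gV G) := omap (@finp G) (insub i).
Definition out_at (G : fsgraph) (j : nat) : option (gV G) := omap (@fout G) (insub j).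

Definition is_framed (G : fsgraph) : Prop :=
  is_string_graph G /\ injective (@finp G) /\ injective (@fout G) /\
  (forall v : gV G, is_input v <-> exists i, finp i = v) /\
  (forall v : gV G, is_output v <-> exists j, fout j = v).

Definition fiso (G H : fsgraph) : Prop :=
  exists (fv : gV G -> gV H) (fe : gE G -> gE H),
    bijective fv /\ bijective fe /\ ghom fv fe /\
    (forall i, inp_at H i = omap fv (inp_at G i)) /\
    (forall j, out_at H j = omap fv (out_at G j)).

Definition has_size (p : nat * nat * nat * nat) (G : fsgraph) : Prop :=
  let: (M, N, P, Q) := p in
  nin G = M /\ nout G = N /\ #|[pred v : gV G | ~~ is_wire v]| <= Q /\
  exists k G0, k <= P /\ built k G0 /\ giso G G0.

(* a rule L -> R: the span L <- B -> R identifies the i-th input (resp. j-th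
   output) of L with the i-th input (resp. j-th output) of R *)
Definition rule := (fsgraph * fsgraph)%type.

Definition valid_rule (r : rule) : Prop :=
  is_framed r.1 /\ is_framed r.2 /\
  (forall i, omap vlab (inp_at r.1 i) = omap vlab (inp_at r.2 i)) /\
  (forall j, omap vlab (out_at r.1 j) = omap vlab (out_at r.2 j)) /\
  (forall i j, inp_at r.1 i = out_at r.1 j <-> inp_at r.2 i = out_at r.2 j).

(* a context: a graph with an outer framing and a framed "hole" (image of B) *)
Record context := Context {
  cg :> graph T;
  c_nin : nat; c_nout : nat;
  c_inp : 'I_c_nin -> gV cg; c_out : 'I_c_nout -> gV cg;
  h_nin : nat; h_nout : nat;
  h_inp : 'I_h_nin -> gV cg; h_out : 'I_h_nout -> gV cg }.

Definition cin_at (D : context) i : option (gV D) := omap (@c_inp D) (insub i).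
Definition cout_at (D : context) j : option (gV D) := omap (@c_out D) (insub j).
Definition hin_at (D : context) i : option (gV D) := omap (@h_inp D) (insub i).
Definition hout_at (D : context) j : option (gV D) := omap (@h_out D) (insub j).

(* G is the pushout of X <- B -> D (B discrete, both legs monic), with the
   framing of G inherited from the outer framing of D *)
Definition is_glue (X : fsgraph) (D : context) (G : fsgraph) : Prop :=
  exists (fD : gV D -> gV G) (fX : gV X -> gV G) (eD : gE D -> gE G) (eX : gE X -> gE G),
    injective fD /\ injective fX /\ injective eD /\ injective eX /\
    ghom fD eD /\ ghom fX eX /\
    (forall i, omap fX (inp_at X i) = omap fD (hin_at D i)) /\
    (forall j, omap fX (out_at X j) = omap fD (hout_at D j)) /\
    (forall g : gV G, (exists d, fD d = g) <-> ~ (exists x, ~~ is_bound x /\ fX x = g)) /\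
    (forall e : gE G, (exists d, eD d = e) <-> ~ (exists x, eX x = e)) /\
    (forall i, inp_at G i = omap fD (cin_at D i)) /\
    (forall j, out_at G j = omap fD (cout_at D j)).

Definition step (r : rule) (G H : fsgraph) : Prop :=
  is_framed G /\ is_framed H /\ exists D : context, is_glue r.1 D G /\ is_glue r.2 D H.

Definition ruleset := rule -> Prop.

Definition rstep (S : ruleset) (G H : fsgraph) : Prop := exists r, S r /\ step r G H.

Definition irreducible (S : ruleset) (G : fsgraph) : Prop := ~ exists H, rstep S G H.

Definition nform (S : ruleset) (G N : fsgraph) : Prop :=
  clos_refl_trans fsgraph (rstep S) G N /\ irreducible S N.

Definition sk_equiv (S K : ruleset) : relation fsgraph :=
  clos_refl_sym_trans fsgraph (fun G H => rstep S G H \/ rstep K G H \/ fiso G H).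

Section Semantics.
Variable R : numClosedFieldType.

(* v(o) = R^(vdim o); v(f) given by its matrix entries, indexed by the lists of
   basis indices of the input factors and of the output factors *)
Record valuation := Valuation {
  vdim : sObj T -> nat;
  vmap : sMor T -> seq nat -> seq nat -> R }.

Variable v : valuation.

Definition wdim (G : graph T) (w : gV G) : nat :=
  match vlab w with inl a => vdim v a | inr _ => 1 end.

Definition in_wire (G : graph T) (x : gV G) (i : nat) : option (gV G) :=
  omap (@esrc T G) [pick e : gE G | (etgt e == x) && (ekd e == EIn i)].
Definition out_wire (G : graph T) (x : gV G) (j : nat) : option (gV G) :=
  omap (@etgt T G) [pick e : gE G | (esrc e == x) && (ekd e == EOut j)].

Definition node_factor (G : graph T) (s : {dffun forall w : gV G, 'I_(wdim w)}) (x : gV G) : R :=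
  match vlab x with
  | inr f =>
      vmap v f
        [seq (if in_wire x i is Some w then nat_of_ord (s w) else 0) | i <- iota 0 (size (sdom f))]
        [seq (if out_wire x j is Some w then nat_of_ord (s w) else 0) | j <- iota 0 (size (scod f))]
  | inl _ => 1%R
  end.

(* tensor contraction: wire-vertices are identities (connected wire-vertices
   carry the same index), node-vertices are v(f); a, b = indices on the
   framed inputs and outputs *)
Definition sem (G : fsgraph) (a b : seq nat) : R :=
  (if (size a == nin G) && (size b == nout G) then
    \sum_(s : {dffun forall w : gV G, 'I_(wdim w)} |
            [forall i : 'I_(nin G), nat_of_ord (s (finp i)) == nth 0 a i] &&
            [forall j : 'I_(nout G), nat_of_ord (s (fout j)) == nth 0 b j] &&
            [forall e : gE G, (is_wire (esrc e) && is_wire (etgt e)) ==>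
                              (nat_of_ord (s (esrc e)) == nat_of_ord (s (etgt e)))])
      \prod_(x : gV G) node_factor s x
  else 0)%R.

Definition sem_eq (G H : fsgraph) : Prop :=
  (forall i, omap vlab (inp_at G i) = omap vlab (inp_at H i)) /\
  (forall j, omap vlab (out_at G j) = omap vlab (out_at H j)) /\
  (forall a b, sem G a b = sem H a b).

Variable kappa : fsgraph -> nat.

(* run with parameters p turns (S, K) into (S', K'):
   E enumerates, up to isomorphism, the S-irreducible graphs of size p;
   c i is the chosen kappa-minimal representative G0 of the class of E i *)
Definition synth_run (p : nat * nat * nat * nat) (SK SK' : ruleset * ruleset) : Prop :=
  exists (m : nat) (E : 'I_m -> fsgraph) (c : 'I_m -> 'I_m),
    (forall i, is_framed (E i) /\ has_size p (E i) /\ irreducible SK.1 (E i)) /\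
    (forall G, is_framed G -> has_size p G -> irreducible SK.1 G -> exists i, fiso G (E i)) /\
    (forall i j, fiso (E i) (E j) -> i = j) /\
    (forall i, sem_eq (E i) (E (c i))) /\
    (forall i j, sem_eq (E i) (E j) -> c i = c j /\ kappa (E (c i)) <= kappa (E j)) /\
    (forall r, SK'.1 r <-> SK.1 r \/
        exists i, kappa (E (c i)) < kappa (E i) /\ r = (E i, E (c i))) /\
    (forall r, SK'.2 r <-> SK.2 r \/
        exists i, kappa (E i) = kappa (E (c i)) /\ i <> c i /\
                  (r = (E i, E (c i)) \/ r = (E (c i), E i))).

End Semantics.
End Graphs.

From HB Require Import structures.
From mathcomp Require Import all_boot all_order all_algebra.
From Stdlib Require Import Relations FunctionalExtensionality Classical.
Set Implicit Arguments. Unset Strict Implicit. Unset Printing Implicit Defensive.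
Import GRing.Theory Num.Theory.

(* The heart of the matter is that DPO rewriting with a sound rule preserves
   the tensor-contraction semantics.  We rewrite [sem] as a sum over index
   assignments with a uniform bound, prove that node weights are local, and
   deduce that the semantics of a pushout X +_B D is a contraction of the
   context D against the semantics of X ([sem_is_glue]).  Consequences:
   rewriting with a sound rule is sound, isomorphic framed graphs have equal
   semantics, and any copy of L rewrites to R by (L, R) through the discrete
   boundary context; the latter two need distinct inputs and outputs, which
   holds in every graph built from generators ([sized_boundary_inj]).

   A single run is then analysed abstractly: since kappa decreases, every
   graph has a normal form; a normal form of a graph of the run's size is a
   copy of an enumerated graph E a, which is linked to its class
   representative E (c a) by a reduction or a congruence ([class_link]), and
   is that representative when there are no congruences ([class_fixed]). *)

Section BoundedSemantics.
Variables (T : signature) (R : numClosedFieldType) (v : valuation T R).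

Definition node_weight (G : graph T) (s : gV G -> nat) (x : gV G) : R :=
  match vlab x with
  | inr f =>
      vmap v f
        [seq (if in_wire x i is Some w then s w else 0) | i <- iota 0 (size (sdom f))]
        [seq (if out_wire x j is Some w then s w else 0) | j <- iota 0 (size (scod f))]
  | inl _ => 1%R
  end.

Definition within_dims (G : graph T) (s : gV G -> nat) : bool :=
  [forall w, s w < wdim v w].
Definition wires_agree (G : graph T) (s : gV G -> nat) : bool :=
  [forall e : gE G, (is_wire (esrc e) && is_wire (etgt e)) ==> (s (esrc e) == s (etgt e))].
Definition matches_inputs (G : fsgraph T) (s : gV G -> nat) (a : seq nat) : bool :=
  [forall i : 'I_(nin G), s (finp i) == nth 0 a i].
Definition matches_outputs (G : fsgraph T) (s : gV G -> nat) (b : seq nat) : bool :=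
  [forall j : 'I_(nout G), s (fout j) == nth 0 b j].

(* [sem] rewritten as a sum over non-dependent assignments gV G -> 'I_B.+1,
   for any uniform bound B on the dimensions; non-dependent assignments can be
   split and recombined along a gluing, dependent ones cannot. *)
Definition sem_bounded (B : nat) (G : fsgraph T) (a b : seq nat) : R :=
  (if (size a == nin G) && (size b == nout G) then
    \sum_(s : {ffun gV G -> 'I_B.+1} |
       within_dims (fun w => nat_of_ord (s w)) && matches_inputs (fun w => nat_of_ord (s w)) a &&
       matches_outputs (fun w => nat_of_ord (s w)) b && wires_agree (fun w => nat_of_ord (s w)))
      \prod_(x : gV G) node_weight (fun w => nat_of_ord (s w)) x
  else 0)%R.

Lemma node_weight_ext (G : graph T) (s s' : gV G -> nat) x :
  s =1 s' -> node_weight s x = node_weight s' x.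
Proof. by move=> /functional_extensionality ->. Qed.

(* Widening dependent assignments to 'I_B.+1 identifies them with the bounded
   assignments respecting the dimensions. *)
Lemma sem_boundedE (B : nat) (G : fsgraph T) a b :
  (forall w : gV G, wdim v w <= B) -> sem v G a b = sem_bounded B G a b.
Proof.
move=> hB; rewrite /sem /sem_bounded; case: ifP => // _.
pose widen (s : {dffun forall w : gV G, 'I_(wdim v w)}) : {ffun gV G -> 'I_B.+1} :=
  [ffun w => widen_ord (leq_trans (hB w) (leqnSn B)) (s w)].
have widenE s w : nat_of_ord (widen s w) = nat_of_ord (s w) by rewrite ffunE.
have widen_inj : injective widen.
  move=> s1 s2 e; apply/ffunP => w; apply/val_inj.
  by rewrite /= -!widenE e.
pose P (s : {dffun forall w : gV G, 'I_(wdim v w)}) :=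
  matches_inputs (fun w => nat_of_ord (s w)) a &&
  matches_outputs (fun w => nat_of_ord (s w)) b && wires_agree (fun w => nat_of_ord (s w)).
pose Q (s : {ffun gV G -> 'I_B.+1}) :=
  within_dims (fun w => nat_of_ord (s w)) && matches_inputs (fun w => nat_of_ord (s w)) a &&
  matches_outputs (fun w => nat_of_ord (s w)) b && wires_agree (fun w => nat_of_ord (s w)).
have image_widen : [set s | Q s] = widen @: [set s | P s].
  apply/setP => t; rewrite inE; apply/idP/imsetP.
  - case/andP=> /andP[/andP[/forallP hb hi] ho] hw.
    pose s : {dffun forall w : gV G, 'I_(wdim v w)} := [ffun w => Ordinal (hb w)].
    have sE : (fun w => nat_of_ord (t w)) = (fun w => nat_of_ord (s w)).
      by apply: functional_extensionality => w; rewrite ffunE.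
    exists s; last by apply/ffunP => w; apply/val_inj; rewrite /= !ffunE.
    by rewrite inE /P -sE hi ho hw.
  - case=> s; rewrite inE => Ps ->.
    have sE : (fun w => nat_of_ord (widen s w)) = (fun w => nat_of_ord (s w)).
      by apply: functional_extensionality => w; rewrite widenE.
    rewrite /Q sE -!andbA; move: Ps; rewrite /P -andbA => ->; rewrite andbT.
    by apply/forallP => w; rewrite ltn_ord.
rewrite (eq_bigl (fun s => s \in [set s | Q s])); last by move=> s; rewrite inE.
rewrite image_widen big_imset /=; last by move=> x y _ _; apply: widen_inj.
apply: eq_big => s; first by rewrite inE.
by move=> _; apply: eq_bigr => x _; apply: node_weight_ext => w; rewrite widenE.
Qed.

Lemma dim_bound_exists (G H : graph T) :
  exists B, (forall w : gV G, wdim v w <= B) /\ (forall w : gV H, wdim v w <= B).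
Proof.
exists (\max_(w : gV G) wdim v w + \max_(w : gV H) wdim v w)%N; split=> w.
  by apply: leq_trans (leq_bigmax (F := fun w => wdim v w) w) (leq_addr _ _).
by apply: leq_trans (leq_bigmax (F := fun w => wdim v w) w) (leq_addl _ _).
Qed.

End BoundedSemantics.

Section Locality.
Variables (T : signature) (K G : graph T) (fv : gV K -> gV G) (fe : gE K -> gE G).
Hypotheses (hom : ghom fv fe) (fv_inj : injective fv) (G_string : is_string_graph G).

Lemma in_wire_hom k f i :
  vlab k = inr f -> i < size (sdom f) ->
  (forall e, etgt e = fv k -> exists e', fe e' = e) ->
  in_wire (fv k) i = omap fv (in_wire k i).
Proof.
move=> hk hi hcov; have [hl he] := hom.
have [_ [_ [_ [_ hnode]]]] := G_string.
have [hin _] := hnode (fv k) f (etrans (hl k) hk).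
have [e0 [[t0 k0] u0]] := hin i hi.
have [e1 [t1 k1]] : exists e1, etgt e1 = k /\ ekd e1 = EIn i.
  have [e' ee] := hcov e0 t0; exists e'; have [_ [tt kk]] := he e'.
  by split; [apply: fv_inj; rewrite -tt ee | rewrite -kk ee].
rewrite /in_wire.
case: pickP => [e /andP[/eqP te /eqP ke]|]; last by move/(_ e0); rewrite t0 k0 !eqxx.
case: pickP => [e' /andP[/eqP te' /eqP ke']|]; last by move/(_ e1); rewrite t1 k1 !eqxx.
have [se' [tte' kke']] := he e'.
by rewrite /= -(u0 e) // (u0 (fe e')) ?se' // tte' te' kke'.
Qed.

Lemma out_wire_hom k f j :
  vlab k = inr f -> j < size (scod f) ->
  (forall e, esrc e = fv k -> exists e', fe e' = e) ->
  out_wire (fv k) j = omap fv (out_wire k j).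
Proof.
move=> hk hj hcov; have [hl he] := hom.
have [_ [_ [_ [_ hnode]]]] := G_string.
have [_ hout] := hnode (fv k) f (etrans (hl k) hk).
have [e0 [[t0 k0] u0]] := hout j hj.
have [e1 [t1 k1]] : exists e1, esrc e1 = k /\ ekd e1 = EOut j.
  have [e' ee] := hcov e0 t0; exists e'; have [tt [_ kk]] := he e'.
  by split; [apply: fv_inj; rewrite -tt ee | rewrite -kk ee].
rewrite /out_wire.
case: pickP => [e /andP[/eqP te /eqP ke]|]; last by move/(_ e0); rewrite t0 k0 !eqxx.
case: pickP => [e' /andP[/eqP te' /eqP ke']|]; last by move/(_ e1); rewrite t1 k1 !eqxx.
have [se' [tte' kke']] := he e'.
by rewrite /= -(u0 e) // (u0 (fe e')) ?tte' // se' te' kke'.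
Qed.

Lemma node_weight_hom (R : numClosedFieldType) (v : valuation T R) (s : gV G -> nat) k :
  (forall e, etgt e = fv k \/ esrc e = fv k -> exists e', fe e' = e) ->
  node_weight v s (fv k) = node_weight v (fun w => s (fv w)) k.
Proof.
move=> hcov; have [hl _] := hom.
rewrite /node_weight hl; case hk: (vlab k) => [a|f] //.
congr (vmap v f _ _); apply/eq_in_map => i; rewrite mem_iota add0n => /andP[_ hi].
  by rewrite (in_wire_hom hk hi) => [|e te]; [case: (in_wire k i) | apply: hcov; left].
by rewrite (out_wire_hom hk hi) => [|e te]; [case: (out_wire k i) | apply: hcov; right].
Qed.

End Locality.

Lemma omap_insub_ord n A (f : 'I_n -> A) (i : 'I_n) : omap f (insub (val i)) = Some (f i).
Proof. by rewrite valK. Qed.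

Lemma omap_insub_lt n A (f : 'I_n -> A) k (h : k < n) : omap f (insub k) = Some (f (Ordinal h)).
Proof. by rewrite insubT. Qed.

Lemma omap_insub_ge n A (f : 'I_n -> A) k : n <= k -> omap f (insub k) = None.
Proof. by move=> h; rewrite insubF // ltnNge h. Qed.

Lemma omap_insub_len n m A A' C (f : 'I_n -> A) (f' : 'I_m -> A') (g : A -> C) (g' : A' -> C) :
  (forall k, omap g (omap f (insub k)) = omap g' (omap f' (insub k))) -> n = m.
Proof.
move=> h; case: (ltngtP n m) => // hnm.
- by have := h n; rewrite omap_insub_ge // (omap_insub_lt _ hnm).
- by have := h m; rewrite (omap_insub_lt _ hnm) omap_insub_ge.
Qed.

Lemma omap_insub_len_id n m A C (f : 'I_n -> C) (f' : 'I_m -> A) (g' : A -> C) :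
  (forall k, omap f (insub k) = omap g' (omap f' (insub k))) -> n = m.
Proof.
move=> h; apply: (@omap_insub_len n m C A C f f' id g') => k.
by rewrite -h; case: (omap f (insub k)).
Qed.

Lemma inp_at_ord (T : signature) (G : fsgraph T) (i : 'I_(nin G)) : inp_at G i = Some (finp i).
Proof. exact: omap_insub_ord. Qed.

Lemma out_at_ord (T : signature) (G : fsgraph T) (j : 'I_(nout G)) : out_at G j = Some (fout j).
Proof. exact: omap_insub_ord. Qed.

Lemma wire_lab (T : signature) (G H : graph T) (x : gV G) (y : gV H) :
  vlab x = vlab y -> is_wire x = is_wire y.
Proof. by rewrite /is_wire => ->. Qed.

Lemma wdim_lab (T : signature) (R : numClosedFieldType) (v : valuation T R) (G H : graph T)
  (x : gV G) (y : gV H) : vlab x = vlab y -> wdim v x = wdim v y.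
Proof. by rewrite /wdim => ->. Qed.

Lemma bound_wire (T : signature) (G : graph T) (x : gV G) : is_bound x -> is_wire x.
Proof. by rewrite /is_bound /is_input /is_output => /orP[/andP[]|/andP[]]. Qed.

Lemma node_weight_wire (T : signature) (R : numClosedFieldType) (v : valuation T R)
  (G : graph T) (s : gV G -> nat) x : is_wire x -> node_weight v s x = 1%R.
Proof. by rewrite /is_wire /node_weight; case: (vlab x). Qed.

Section ContextContraction.
Variables (T : signature) (R : numClosedFieldType) (v : valuation T R) (D : context T).

Definition hole_inputs (s : gV D -> nat) : seq nat :=
  [seq odflt 0 (omap s (hin_at D k)) | k <- iota 0 (h_nin D)].
Definition hole_outputs (s : gV D -> nat) : seq nat :=
  [seq odflt 0 (omap s (hout_at D k)) | k <- iota 0 (h_nout D)].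

Definition matches_context_inputs (s : gV D -> nat) (a : seq nat) : bool :=
  [forall i : 'I_(c_nin D), s (c_inp i) == nth 0 a i].
Definition matches_context_outputs (s : gV D -> nat) (b : seq nat) : bool :=
  [forall j : 'I_(c_nout D), s (c_out j) == nth 0 b j].

Definition contract (B : nat) (f : seq nat -> seq nat -> R) (a b : seq nat) : R :=
  (if (size a == c_nin D) && (size b == c_nout D) then
    \sum_(t : {ffun gV D -> 'I_B.+1} |
       within_dims v (fun w => nat_of_ord (t w)) &&
       matches_context_inputs (fun w => nat_of_ord (t w)) a &&
       matches_context_outputs (fun w => nat_of_ord (t w)) b &&
       wires_agree (fun w => nat_of_ord (t w)))
      (\prod_(d : gV D) node_weight v (fun w => nat_of_ord (t w)) d) *
       f (hole_inputs (fun w => nat_of_ord (t w))) (hole_outputs (fun w => nat_of_ord (t w)))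
  else 0)%R.

Lemma nth_hole_inputs (s : gV D -> nat) i :
  i < h_nin D -> nth 0 (hole_inputs s) i = odflt 0 (omap s (hin_at D i)).
Proof. by move=> hi; rewrite /hole_inputs (nth_map 0) ?size_iota // nth_iota. Qed.

Lemma nth_hole_outputs (s : gV D -> nat) j :
  j < h_nout D -> nth 0 (hole_outputs s) j = odflt 0 (omap s (hout_at D j)).
Proof. by move=> hj; rewrite /hole_outputs (nth_map 0) ?size_iota // nth_iota. Qed.

End ContextContraction.

Section Gluing.
Variables (T : signature) (R : numClosedFieldType) (v : valuation T R).
Variables (X : fsgraph T) (D : context T) (G : fsgraph T).
Variables (fD : gV D -> gV G) (fX : gV X -> gV G) (eD : gE D -> gE G) (eX : gE X -> gE G).
Hypotheses (fD_inj : injective fD) (fX_inj : injective fX).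
Hypotheses (homD : ghom fD eD) (homX : ghom fX eX).
Hypothesis hole_inp : forall i, omap fX (inp_at X i) = omap fD (hin_at D i).
Hypothesis hole_out : forall j, omap fX (out_at X j) = omap fD (hout_at D j).
Hypothesis glue_vertices :
  forall g : gV G, (exists d, fD d = g) <-> ~ (exists x, ~~ is_bound x /\ fX x = g).
Hypothesis glue_edges : forall e : gE G, (exists d, eD d = e) <-> ~ (exists x, eX x = e).
Hypothesis frame_inp : forall i, inp_at G i = omap fD (cin_at D i).
Hypothesis frame_out : forall j, out_at G j = omap fD (cout_at D j).
Hypotheses (X_framed : is_framed X) (G_string : is_string_graph G).

Lemma glue_vertex_cover g : (exists d, fD d = g) \/ (exists x, ~~ is_bound x /\ fX x = g).
Proof.
by case: (classic (exists x, ~~ is_bound x /\ fX x = g)) => h; [right | left; apply/glue_vertices].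
Qed.

Lemma glue_edge_cover e : (exists d, eD d = e) \/ (exists x, eX x = e).
Proof. by case: (classic (exists x, eX x = e)) => h; [right | left; apply/glue_edges]. Qed.

Lemma glue_shared_bound x d : fX x = fD d -> is_bound x.
Proof.
move=> e; apply/negPn/negP => nb.
by apply: (proj1 (glue_vertices (fD d))); [exists d | exists x].
Qed.

Lemma glue_nin_G : nin G = c_nin D. Proof. exact: omap_insub_len_id frame_inp. Qed.
Lemma glue_nout_G : nout G = c_nout D. Proof. exact: omap_insub_len_id frame_out. Qed.
Lemma glue_nin_X : nin X = h_nin D. Proof. exact: omap_insub_len hole_inp. Qed.
Lemma glue_nout_X : nout X = h_nout D. Proof. exact: omap_insub_len hole_out. Qed.

Lemma wireD d : is_wire (fD d) = is_wire d. Proof. by apply: wire_lab; case: homD. Qed.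
Lemma wireX x : is_wire (fX x) = is_wire x. Proof. by apply: wire_lab; case: homX. Qed.

Lemma within_dims_glue (s : gV G -> nat) :
  within_dims v s = within_dims v (fun d => s (fD d)) && within_dims v (fun x => s (fX x)).
Proof.
have dimD d : wdim v (fD d) = wdim v d by apply: wdim_lab; case: homD.
have dimX x : wdim v (fX x) = wdim v x by apply: wdim_lab; case: homX.
apply/forallP/andP => [h|[/forallP h1 /forallP h2] g].
  by split; apply/forallP => y; rewrite -?dimD -?dimX; apply: h.
by case: (glue_vertex_cover g) => [[d <-]|[x [_ <-]]]; rewrite ?dimD ?dimX.
Qed.

Lemma matches_inputs_glue (s : gV G -> nat) a :
  matches_inputs s a = matches_context_inputs (fun d => s (fD d)) a.
Proof.
pose q k := if cin_at D k is Some d then s (fD d) == nth 0 a k else true.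
transitivity [forall i : 'I_(nin G), q i].
  apply: eq_forallb => i; rewrite /q.
  by have := frame_inp i; rewrite inp_at_ord; case: (cin_at D i) => [d [->]|].
by rewrite glue_nin_G; apply: eq_forallb => i; rewrite /q /cin_at omap_insub_ord.
Qed.

Lemma matches_outputs_glue (s : gV G -> nat) b :
  matches_outputs s b = matches_context_outputs (fun d => s (fD d)) b.
Proof.
pose q k := if cout_at D k is Some d then s (fD d) == nth 0 b k else true.
transitivity [forall j : 'I_(nout G), q j].
  apply: eq_forallb => j; rewrite /q.
  by have := frame_out j; rewrite out_at_ord; case: (cout_at D j) => [d [->]|].
by rewrite glue_nout_G; apply: eq_forallb => j; rewrite /q /cout_at omap_insub_ord.
Qed.

Lemma wires_agree_glue (s : gV G -> nat) :
  wires_agree s = wires_agree (fun d => s (fD d)) && wires_agree (fun x => s (fX x)).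
Proof.
have [_ heD] := homD; have [_ heX] := homX.
apply/forallP/andP => [h|[/forallP h1 /forallP h2] e].
  split; apply/forallP => y.
    by have := h (eD y); have [-> [-> _]] := heD y; rewrite !wireD.
  by have := h (eX y); have [-> [-> _]] := heX y; rewrite !wireX.
case: (glue_edge_cover e) => [[d <-]|[x <-]].
  by have := h1 d; have [-> [-> _]] := heD d; rewrite !wireD.
by have := h2 x; have [-> [-> _]] := heX x; rewrite !wireX.
Qed.

Lemma hole_inputs_match (s : gV G -> nat) :
  matches_inputs (fun x => s (fX x)) (hole_inputs (fun d => s (fD d))).
Proof.
apply/forallP => i; have hi : i < h_nin D by rewrite -glue_nin_X.
rewrite nth_hole_inputs //; have := hole_inp i; rewrite inp_at_ord.
by case: (hin_at D i) => [h [->]|].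
Qed.

Lemma hole_outputs_match (s : gV G -> nat) :
  matches_outputs (fun x => s (fX x)) (hole_outputs (fun d => s (fD d))).
Proof.
apply/forallP => j; have hj : j < h_nout D by rewrite -glue_nout_X.
rewrite nth_hole_outputs //; have := hole_out j; rewrite out_at_ord.
by case: (hout_at D j) => [h [->]|].
Qed.

Lemma node_weight_glueD (s : gV G -> nat) d :
  node_weight v s (fD d) = node_weight v (fun d => s (fD d)) d.
Proof.
case: (boolP (is_wire d)) => wd; first by rewrite !node_weight_wire ?wireD.
have [_ heX] := homX.
apply: (node_weight_hom homD fD_inj G_string) => e he.
case: (glue_edge_cover e) => [//|[x ex]].
have [sx [tx _]] := heX x; exfalso; move/negP: wd; apply; rewrite -wireD.
case: he; rewrite -ex ?sx ?tx => he; rewrite -he wireX; apply/bound_wire/(glue_shared_bound he).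
Qed.

Lemma node_weight_glueX (s : gV G -> nat) x :
  node_weight v s (fX x) = node_weight v (fun x => s (fX x)) x.
Proof.
case: (boolP (is_wire x)) => wx; first by rewrite !node_weight_wire ?wireX.
have [_ heD] := homD.
apply: (node_weight_hom homX fX_inj G_string) => e he.
case: (glue_edge_cover e) => [[d ed]|//].
have [sd [td _]] := heD d; exfalso; move/negP: wx; apply; apply: bound_wire.
by case: he; rewrite -ed ?sd ?td => he; apply: (glue_shared_bound (esym he)).
Qed.

Lemma node_weight_prod_glue (s : gV G -> nat) :
  (\prod_g node_weight v s g =
   (\prod_d node_weight v (fun d => s (fD d)) d) * \prod_x node_weight v (fun x => s (fX x)) x)%R.
Proof.
rewrite (bigID (mem (fD @: [set: gV D]))) /=; congr (_ * _)%R.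
  rewrite big_imset /=; last by move=> ? ? _ _; apply: fD_inj.
  by apply: eq_big => [d|d _]; rewrite ?inE // node_weight_glueD.
rewrite [RHS](bigID (fun x : gV X => is_bound x)) /=.
rewrite [X in (X * _)%R]big1 ?mul1r; last first.
  by move=> x hx; apply/node_weight_wire/bound_wire.
rewrite (eq_bigl (mem (fX @: [set x | ~~ is_bound x]))); last first.
  move=> g; rewrite /= /in_mem /=; apply/idP/idP.
    move=> hn; case: (glue_vertex_cover g) => [[d ed]|[x [hx ex]]].
      by move/negP: hn; case; apply/imsetP; exists d; rewrite ?inE.
    by apply/imsetP; exists x; rewrite ?inE.
  case/imsetP => x; rewrite inE => hx ->; apply/negP => /imsetP[d _ ed].
  by move: hx; rewrite (glue_shared_bound ed).
rewrite big_imset /=; last by move=> ? ? _ _; apply: fX_inj.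
by apply: eq_big => [x|x _]; rewrite ?inE // node_weight_glueX.
Qed.

Lemma glue_assignments_agree (t : gV D -> nat) (u : gV X -> nat) x d :
  matches_inputs u (hole_inputs t) -> matches_outputs u (hole_outputs t) ->
  fX x = fD d -> u x = t d.
Proof.
move=> hu_in hu_out ed; have [_ [_ [_ [in_fr out_fr]]]] := X_framed.
case/orP: (glue_shared_bound ed) => [/in_fr [i ei]|/out_fr [j ej]].
  have hi : i < h_nin D by rewrite -glue_nin_X.
  have := (forallP hu_in) i; rewrite nth_hole_inputs // ei.
  have := hole_inp i; rewrite inp_at_ord; case: (hin_at D i) => [h [eh]|//] /=.
  have -> : h = d by apply: fD_inj; rewrite -eh ei ed.
  by move/eqP.
have hj : j < h_nout D by rewrite -glue_nout_X.
have := (forallP hu_out) j; rewrite nth_hole_outputs // ej.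
have := hole_out j; rewrite out_at_ord; case: (hout_at D j) => [h [eh]|//] /=.
have -> : h = d by apply: fD_inj; rewrite -eh ej ed.
by move/eqP.
Qed.

(* Semantics of a gluing: contracting D against the semantics of X computes
   the semantics of G.  An assignment of G is the same as a pair of
   assignments of D and X agreeing on the hole boundary. *)
Lemma sem_glue B a b :
  (forall w : gV G, wdim v w <= B) -> sem v G a b = contract v D B (sem v X) a b.
Proof.
move=> hB.
have hBX (x : gV X) : wdim v x <= B.
  by have [hl _] := homX; rewrite -(wdim_lab v (hl x)).
have semX : sem v X = sem_bounded v B X.
  by apply: functional_extensionality => a'; apply: functional_extensionality => b';
     apply: sem_boundedE.
rewrite (sem_boundedE a b hB) /contract semX /sem_bounded glue_nin_G glue_nout_G.
case: ifP => // _; symmetry.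
have hole_size (t : gV D -> nat) :
    (size (hole_inputs t) == nin X) && (size (hole_outputs t) == nout X) = true.
  by rewrite !size_map !size_iota glue_nin_X glue_nout_X !eqxx.
under eq_bigr => t _ do rewrite hole_size big_distrr /=.
rewrite pair_big_dep /=.
pose restrict (s : {ffun gV G -> 'I_B.+1}) :
    ({ffun gV D -> 'I_B.+1} * {ffun gV X -> 'I_B.+1})%type :=
  ([ffun d => s (fD d)], [ffun x => s (fX x)]).
pose merge (p : ({ffun gV D -> 'I_B.+1} * {ffun gV X -> 'I_B.+1})%type) :
    {ffun gV G -> 'I_B.+1} :=
  [ffun w => match [pick d | fD d == w] with
             | Some d => p.1 d
             | None => if [pick x | fX x == w] is Some x then p.2 x else ord0
             end].
have restrict1 s : (fun d => nat_of_ord ((restrict s).1 d)) = (fun d => nat_of_ord (s (fD d))).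
  by apply: functional_extensionality => d; rewrite ffunE.
have restrict2 s : (fun x => nat_of_ord ((restrict s).2 x)) = (fun x => nat_of_ord (s (fX x))).
  by apply: functional_extensionality => x; rewrite ffunE.
rewrite (reindex restrict); last first.
  exists merge.
    move=> s _; apply/ffunP => w; rewrite ffunE.
    case: pickP => [d /eqP <-|nd]; first by rewrite ffunE.
    case: pickP => [x /eqP <-|nx]; first by rewrite ffunE.
    case: (glue_vertex_cover w) => [[d ed]|[x [_ ex]]].
      by have := nd d; rewrite ed eqxx.
    by have := nx x; rewrite ex eqxx.
  move=> [t u]; rewrite inE => /and3P[_ /andP[/andP[_ u_in] u_out] _].
  congr pair; apply/ffunP => y; rewrite !ffunE /=.
    case: pickP => [d /eqP /fD_inj -> //|nd].
    by have := nd y; rewrite eqxx.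
  case: pickP => [d /eqP ed|nd]; last first.
    case: pickP => [x /eqP /fX_inj -> //|nx].
    by have := nx y; rewrite eqxx.
  by apply/val_inj/esym/(glue_assignments_agree u_in u_out); rewrite ed.
apply: eq_big => s; rewrite /= restrict1 restrict2.
  rewrite within_dims_glue matches_inputs_glue matches_outputs_glue wires_agree_glue.
  rewrite (hole_inputs_match (fun w => nat_of_ord (s w))).
  rewrite (hole_outputs_match (fun w => nat_of_ord (s w))) !andbT.
  by case: (within_dims _ _); case: (within_dims _ _); case: (matches_context_inputs _ _);
     case: (matches_context_outputs _ _); case: (wires_agree _); case: (wires_agree _).
by move=> _; rewrite node_weight_prod_glue.
Qed.

End Gluing.

Lemma sem_is_glue (T : signature) (R : numClosedFieldType) (v : valuation T R)
  (X : fsgraph T) (D : context T) (G : fsgraph T) B a b :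
  is_glue X D G -> is_framed X -> is_framed G -> (forall w : gV G, wdim v w <= B) ->
  sem v G a b = contract v D B (sem v X) a b.
Proof.
move=> [fD [fX [eD [eX [ifD [ifX [_ [_ [hD [hX [hin [hout [hV [hE [gin gout]]]]]]]]]]]]]]].
by move=> fX_fr [G_str _]; apply: (sem_glue ifD ifX hD hX hin hout hV hE gin gout fX_fr G_str).
Qed.

Section SemanticEquality.
Variables (T : signature) (R : numClosedFieldType) (v : valuation T R).

Lemma sem_eq_refl (G : fsgraph T) : sem_eq v G G.
Proof. by []. Qed.

Lemma sem_eq_sym (G H : fsgraph T) : sem_eq v G H -> sem_eq v H G.
Proof. by move=> [h1 [h2 h3]]; split; [|split] => *; rewrite ?h1 ?h2 ?h3. Qed.

Lemma sem_eq_trans (G H K : fsgraph T) : sem_eq v G H -> sem_eq v H K -> sem_eq v G K.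
Proof.
move=> [h1 [h2 h3]] [h1' [h2' h3']]; split; [|split] => *.
- by rewrite h1 h1'.
- by rewrite h2 h2'.
- by rewrite h3 h3'.
Qed.

Lemma glue_labels (X : fsgraph T) (D : context T) (G : fsgraph T) :
  is_glue X D G ->
  (forall i, omap vlab (inp_at G i) = omap vlab (cin_at D i)) /\
  (forall j, omap vlab (out_at G j) = omap vlab (cout_at D j)).
Proof.
move=> [fD [_ [eD [_ [_ [_ [_ [_ [[hl _] [_ [_ [_ [_ [_ [gin gout]]]]]]]]]]]]]]].
split=> i; [rewrite gin; case: (cin_at D i) | rewrite gout; case: (cout_at D i)] => //= d.
  by rewrite hl.
by rewrite hl.
Qed.

(* Soundness of DPO rewriting: a step with a sound rule preserves semantics,
   since both sides are contractions of the same context. *)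
Lemma step_sound (r : rule T) (G H : fsgraph T) :
  step r G H -> is_framed r.1 -> is_framed r.2 -> sem_eq v r.1 r.2 -> sem_eq v G H.
Proof.
move=> [fG [fH [D [glueG glueH]]]] f1 f2 [_ [_ hs]].
have [lG_in lG_out] := glue_labels glueG; have [lH_in lH_out] := glue_labels glueH.
split; first by move=> i; rewrite lG_in lH_in.
split; first by move=> j; rewrite lG_out lH_out.
move=> a b; have [B [hBG hBH]] := dim_bound_exists v G H.
rewrite (sem_is_glue a b glueG f1 fG hBG) (sem_is_glue a b glueH f2 fH hBH).
have -> // : sem v r.1 = sem v r.2.
by apply: functional_extensionality => a'; apply: functional_extensionality => b'.
Qed.

End SemanticEquality.

Section Isomorphism.
Variable T : signature.

Lemma fiso_refl (G : fsgraph T) : fiso G G.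
Proof.
exists id, id; split; first by exists id.
split; first by exists id.
split; first by split.
by split=> i; case: (inp_at G i) => [?|]; case: (out_at G i) => [?|].
Qed.

Lemma fiso_sym (G H : fsgraph T) : fiso G H -> fiso H G.
Proof.
move=> [fv [fe [[gv fg gf] [[ge eg ge'] [[hl he] [hi ho]]]]]].
exists gv, ge; split; first by exists fv.
split; first by exists fe.
split.
  split=> [w|e]; first by rewrite -{2}(gf w) hl.
  have [s [t k]] := he (ge e); rewrite ge' in s t k.
  by rewrite s t k !fg.
split=> i; [rewrite hi; case: (inp_at G i) | rewrite ho; case: (out_at G i)] => //= x.
  by rewrite fg.
by rewrite fg.
Qed.

Lemma fiso_trans (G H K : fsgraph T) : fiso G H -> fiso H K -> fiso G K.
Proof.
move=> [fv [fe [bv [be [[hl he] [hi ho]]]]]] [fv' [fe' [bv' [be' [[hl' he'] [hi' ho']]]]]].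
exists (fv' \o fv), (fe' \o fe); split; first exact: bij_comp.
split; first exact: bij_comp.
split.
  split=> [w|e] /=; first by rewrite hl' hl.
  have [s [t k]] := he e; have [s' [t' k']] := he' (fe e).
  by rewrite s' t' k' s t k.
by split=> i; [rewrite hi' hi; case: (inp_at G i) | rewrite ho' ho; case: (out_at G i)].
Qed.

(* The discrete context consisting only of n input and m output wires, which
   form both its outer framing and the boundary of its hole. *)
Definition boundary_context (n m : nat) (lab : ('I_n + 'I_m)%type -> (sObj T + sMor T)%type) :
  context T :=
  @Context T (@Graph T ('I_n + 'I_m)%type void lab (fun e => match e with end)
               (fun e => match e with end) (fun e => match e with end))
    n m inl inr n m inl inr.

Lemma glue_boundary (X G : fsgraph T) n m
  (lab : ('I_n + 'I_m)%type -> (sObj T + sMor T)%type) (bX : ('I_n + 'I_m)%type -> gV X)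
  (fX : gV X -> gV G) (eX : gE X -> gE G) :
  is_framed X -> injective bX -> (forall d, vlab (bX d) = lab d) ->
  (forall k, inp_at X k = omap (fun i => bX (inl i)) (insub k)) ->
  (forall k, out_at X k = omap (fun j => bX (inr j)) (insub k)) ->
  bijective fX -> bijective eX -> ghom fX eX ->
  (forall k, inp_at G k = omap fX (inp_at X k)) ->
  (forall k, out_at G k = omap fX (out_at X k)) ->
  is_glue X (boundary_context lab) G.
Proof.
move=> [_ [_ [_ [in_fr out_fr]]]] ibX lX hiX hoX bfX beX [hl he] hiG hoG.
have ifX := bij_inj bfX; have [gX fg gf] := bfX; have [geX efg egf] := beX.
exists (fun d => fX (bX d)), fX, (fun e : void => match e with end), eX.
do 4 (split; first by [move=> x y /ifX /ibX | exact: ifX | case | exact: bij_inj beX]).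
split; first by split=> [d|[]] //=; rewrite hl.
split; first by split.
split; first by move=> k; rewrite hiX /hin_at /=; case: (insub k).
split; first by move=> k; rewrite hoX /hout_at /=; case: (insub k).
split.
  move=> g; split.
    move=> [d <-] [x [nb /ifX ex]]; move/negP: nb; apply; rewrite {}ex /is_bound.
    case: d => [i|j]; apply/orP; [left; apply/in_fr | right; apply/out_fr].
      by have := hiX i; rewrite valK /inp_at; case: insub => [i' [<-]|//]; exists i'.
    by have := hoX j; rewrite valK /out_at; case: insub => [j' [<-]|//]; exists j'.
  move=> h; case: (boolP (is_bound (gX g))) => hb; last first.
    by exfalso; apply: h; exists (gX g); rewrite gf.
  case/orP: hb => [/in_fr [i ei]|/out_fr [j ej]].
    have := hiX i; rewrite inp_at_ord; case: (insub (val i)) => [i' [e']|//].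
    by exists (inl i'); rewrite -e' ei gf.
  have := hoX j; rewrite out_at_ord; case: (insub (val j)) => [j' [e']|//].
  by exists (inr j'); rewrite -e' ej gf.
split.
  move=> e; split; first by case=> [[]].
  by move=> h; exfalso; apply: h; exists (geX e); rewrite egf.
by split=> k; [rewrite hiG hiX /cin_at | rewrite hoG hoX /cout_at] => /=; case: (insub k).
Qed.

Definition boundary_map (L : fsgraph T) (d : ('I_(nin L) + 'I_(nout L))%type) : gV L :=
  match d with inl i => finp i | inr j => fout j end.
Definition boundary_lab (L : fsgraph T) (d : ('I_(nin L) + 'I_(nout L))%type) :=
  vlab (boundary_map d).

Lemma omap_id_eq A (x : option A) : x = omap id x.
Proof. by case: x. Qed.

Lemma glue_iso (L G : fsgraph T) :
  fiso L G -> is_framed L -> injective (@boundary_map L) ->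
  is_glue L (boundary_context (@boundary_lab L)) G.
Proof.
move=> [fv [fe [bv [be [hh [hi ho]]]]]] fL ib.
exact: (@glue_boundary L G _ _ (@boundary_lab L) (@boundary_map L) fv fe).
Qed.

Lemma fiso_sem (R : numClosedFieldType) (v : valuation T R) (L G : fsgraph T) :
  fiso L G -> is_framed L -> is_framed G -> injective (@boundary_map L) -> sem_eq v L G.
Proof.
move=> iso fL fG ib.
have glueG := glue_iso iso fL ib; have glueL := glue_iso (fiso_refl L) fL ib.
have [lG_in lG_out] := glue_labels glueG; have [lL_in lL_out] := glue_labels glueL.
split; first by move=> i; rewrite lG_in lL_in.
split; first by move=> j; rewrite lG_out lL_out.
move=> a b; have [B [hBL hBG]] := dim_bound_exists v L G.
by rewrite (sem_is_glue a b glueG fL fG hBG) (sem_is_glue a b glueL fL fL hBL).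
Qed.

Lemma step_from_iso (L R G : fsgraph T) :
  fiso L G -> is_framed L -> is_framed R -> is_framed G ->
  injective (@boundary_map L) -> injective (@boundary_map R) ->
  (forall i, omap vlab (inp_at L i) = omap vlab (inp_at R i)) ->
  (forall j, omap vlab (out_at L j) = omap vlab (out_at R j)) ->
  step (L, R) G R.
Proof.
move=> iso fL fR fG ibL ibR hli hlo.
have eN : nin L = nin R by apply: (omap_insub_len hli).
have eM : nout L = nout R by apply: (omap_insub_len hlo).
pose cast (d : ('I_(nin L) + 'I_(nout L))%type) : ('I_(nin R) + 'I_(nout R))%type :=
  match d with inl i => inl (cast_ord eN i) | inr j => inr (cast_ord eM j) end.
have cast_inj : injective cast by case=> [i|j] [i'|j'] //= [] /val_inj ->.
have glueR : is_glue R (boundary_context (@boundary_lab L)) R.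
  apply: (@glue_boundary R R _ _ _ (fun d => boundary_map (cast d)) id id) => //;
    try first [by exists id | by split | by move=> k; apply: omap_id_eq].
  - by move=> x y /ibR /cast_inj.
  - case=> [i|j] /=.
      have := hli (val i); rewrite (inp_at_ord i) -[val i]/(val (cast_ord eN i)) inp_at_ord.
      by case.
    have := hlo (val j); rewrite (out_at_ord j) -[val j]/(val (cast_ord eM j)) out_at_ord.
    by case.
  - move=> k; case: (ltnP k (nin L)) => h.
      have h' : k < nin R by rewrite -eN.
      rewrite (omap_insub_lt _ h) /inp_at (omap_insub_lt _ h').
      by congr (Some (finp _)); apply: val_inj.
    by rewrite omap_insub_ge // /inp_at omap_insub_ge // -eN.
  - move=> k; case: (ltnP k (nout L)) => h.
      have h' : k < nout R by rewrite -eM.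
      rewrite (omap_insub_lt _ h) /out_at (omap_insub_lt _ h').
      by congr (Some (fout _)); apply: val_inj.
    by rewrite omap_insub_ge // /out_at omap_insub_ge // -eM.
split=> //; split=> //; exists (boundary_context (@boundary_lab L)).
by split=> //; apply: glue_iso.
Qed.

End Isomorphism.

Section SizedGraphs.
Variable T : signature.

Definition touched (G : graph T) : Prop :=
  forall w : gV G, is_wire w -> exists e, esrc e = w \/ etgt e = w.

Lemma generator_touched g : touched (generator (T := T) g).
Proof.
case: g => [a|f] w /=; first by move=> _; exists tt; case: w; [right | left].
by case: w => [[i|j]|] //= _; [exists (inl i); left | exists (inr j); right].
Qed.

Lemma gen_union_touched gs : touched (gen_union (T := T) gs).
Proof.
elim: gs => [|g gs IH] /=; first by case.
case=> [x|y] /= hw.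
  by have [e [he|he]] := @generator_touched g x hw; exists (inl e); rewrite he; [left|right].
by have [e [he|he]] := IH y hw; exists (inr e); rewrite he; [left|right].
Qed.

(* Plugging only identifies vertices, so no wire becomes isolated. *)
Lemma built_touched k (G : graph T) : built k G -> touched G.
Proof.
elim=> [gs|k' G' x y hxy _ IH _ _]; first exact: gen_union_touched.
move=> w /= hw; have [e he] := IH (val w) hw.
have plugged (z : gV G') : z = val w ->
    insubd (exist (fun w => w != y) x hxy) z = w :> {w | w != y}.
  by move=> ez; apply: val_inj; rewrite val_insubd ez (valP w).
by exists e => /=; case: he => he; [left|right]; apply: plugged; rewrite he.
Qed.

Lemma giso_touched (G H : graph T) : giso G H -> touched H -> touched G.
Proof.
move=> [fv [fe [bv [[ge eg ge'] [hl he]]]]] tH w hw.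
have [e0 he0] := tH (fv w) (etrans (wire_lab (hl w)) hw); exists (ge e0).
have [s [t _]] := he (ge e0); rewrite ge' in s t.
by case: he0 => he0; [left|right]; apply: (bij_inj bv); rewrite -?s -?t.
Qed.

(* In a framed graph of any size, no vertex is both an input and an output,
   so the framed boundary map is injective. *)
Lemma sized_boundary_inj p (G : fsgraph T) :
  is_framed G -> has_size p G -> injective (@boundary_map T G).
Proof.
case: p => [[[M N] P] Q] [_ [fi [fo [hin hout]]]] [_ [_ [_ [k [G0 [_ [hb hg]]]]]]].
have tG := giso_touched hg (built_touched hb).
have in_not_out (i : 'I_(nin G)) (j : 'I_(nout G)) : finp i <> fout j.
  move=> e.
  have /andP[hw /forallP no_in] : is_input (finp i) by apply/hin; exists i.
  have /andP[_ /forallP no_out] : is_output (finp i) by apply/hout; exists j.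
  have [e0 [he|he]] := tG _ hw; [have := no_out e0 | have := no_in e0]; by rewrite he eqxx.
case=> [i|j] [i'|j'] //= e.
- by rewrite (fi _ _ e).
- by case: (in_not_out _ _ e).
- by case: (in_not_out _ _ (esym e)).
- by rewrite (fo _ _ e).
Qed.

End SizedGraphs.

Section AbstractRewriting.
Variable T : signature.

Definition sub_rules (S S' : ruleset T) : Prop := forall r, S r -> S' r.

Lemma rstep_mono (S S' : ruleset T) G H : sub_rules S S' -> rstep S G H -> rstep S' G H.
Proof. by move=> sub [r [hr h]]; exists r; split=> //; apply: sub. Qed.

Lemma irreducible_mono (S S' : ruleset T) G : sub_rules S S' -> irreducible S' G -> irreducible S G.
Proof. by move=> sub irr [H h]; apply: irr; exists H; apply: rstep_mono h. Qed.

Lemma normal_form_exists (kappa : fsgraph T -> nat) (S : ruleset T) :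
  (forall G H, rstep S G H -> kappa H < kappa G) -> forall G, exists N, nform S G N.
Proof.
move=> dec G; elim: {G}(kappa G).+1 {-2}G (ltnSn (kappa G)) => [//|k IH] G hk.
case: (classic (exists H, rstep S G H)) => [[H hGH]|irr].
  have [N [hHN irrN]] := IH H (leq_trans (dec _ _ hGH) hk).
  by exists N; split=> //; apply: rt_trans hHN; apply: rt_step.
by exists G; split=> //; apply: rt_refl.
Qed.

Lemma rewrites_sk_equiv (S K : ruleset T) G H :
  clos_refl_trans _ (rstep S) G H -> sk_equiv S K G H.
Proof.
elim=> [x y h|x|x y z _ h1 _ h2]; first by apply: rst_step; left.
  exact: rst_refl.
exact: rst_trans h1 h2.
Qed.

Lemma fiso_sk_equiv (S K : ruleset T) G H : fiso G H -> sk_equiv S K G H.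
Proof. by move=> iso; apply: rst_step; right; right. Qed.

End AbstractRewriting.

Section SoundRewriting.
Variables (T : signature) (R : numClosedFieldType) (v : valuation T R).

Definition sound_rules (S : ruleset T) : Prop :=
  forall r, S r -> is_framed r.1 /\ is_framed r.2 /\ sem_eq v r.1 r.2.

Lemma rewrites_invariant (S : ruleset T) p G N :
  sound_rules S -> (forall G H, rstep S G H -> has_size p G -> has_size p H) ->
  clos_refl_trans _ (rstep S) G N -> is_framed G -> has_size p G ->
  [/\ is_framed N, has_size p N & sem_eq v G N].
Proof.
move=> sound size_pres; elim=> [x y hxy|x|x y z _ IH1 _ IH2] fx sx.
- have [r [hr hst]] := hxy; have [f1 [f2 hs]] := sound r hr.
  split; [by case: hst => _ [] | exact: size_pres hxy sx | exact: step_sound hst f1 f2 hs].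
- by split=> //; apply: sem_eq_refl.
- have [fy sy hxy] := IH1 fx sx; have [fz sz hyz] := IH2 fy sy.
  by split=> //; apply: sem_eq_trans hxy hyz.
Qed.

End SoundRewriting.

Section RunAnalysis.
Variables (T : signature) (R : numClosedFieldType) (v : valuation T R).
Variables (kappa : fsgraph T -> nat) (p : nat * nat * nat * nat).
Variables (SK SK' : ruleset T * ruleset T) (Sfin Kfin : ruleset T).
Variables (m : nat) (E : 'I_m -> fsgraph T) (c : 'I_m -> 'I_m).
Hypothesis E_ok : forall a, is_framed (E a) /\ has_size p (E a) /\ irreducible SK.1 (E a).
Hypothesis E_cover :
  forall G, is_framed G -> has_size p G -> irreducible SK.1 G -> exists a, fiso G (E a).
Hypothesis c_sem : forall a, sem_eq v (E a) (E (c a)).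
Hypothesis c_min :
  forall a b, sem_eq v (E a) (E b) -> c a = c b /\ kappa (E (c a)) <= kappa (E b).
Hypothesis S'_def : forall r, SK'.1 r <-> SK.1 r \/
  exists a, kappa (E (c a)) < kappa (E a) /\ r = (E a, E (c a)).
Hypothesis K'_def : forall r, SK'.2 r <-> SK.2 r \/
  exists a, kappa (E a) = kappa (E (c a)) /\ a <> c a /\
            (r = (E a, E (c a)) \/ r = (E (c a), E a)).
Hypotheses (S'_sub : sub_rules SK'.1 Sfin) (K'_sub : sub_rules SK'.2 Kfin).
Hypothesis Sfin_sound : sound_rules v Sfin.
Hypothesis Sfin_size : forall G H, rstep Sfin G H -> has_size p G -> has_size p H.
Hypothesis Sfin_dec : forall G H, rstep Sfin G H -> kappa H < kappa G.

Lemma run_S_sub : sub_rules SK.1 Sfin.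
Proof. by move=> r hr; apply/S'_sub/S'_def; left. Qed.

Lemma class_rule_step a N : fiso (E a) N -> is_framed N -> step (E a, E (c a)) N (E (c a)).
Proof.
move=> iso fN; have [fa [sa _]] := E_ok a; have [fca [sca _]] := E_ok (c a).
have [lab_in [lab_out _]] := c_sem a.
exact: step_from_iso iso fa fca fN (sized_boundary_inj fa sa) (sized_boundary_inj fca sca)
  lab_in lab_out.
Qed.

Lemma normal_form_class G N :
  is_framed G -> has_size p G -> nform Sfin G N ->
  exists a, [/\ is_framed N, fiso N (E a) & sem_eq v G (E a)].
Proof.
move=> fG sG [hGN irrN].
have [fN sN seN] := rewrites_invariant Sfin_sound Sfin_size hGN fG sG.
have [a iso] := E_cover fN sN (irreducible_mono run_S_sub irrN).
exists a; split=> //; apply: sem_eq_trans seN _.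
have [fa _] := E_ok a; exact: fiso_sem iso fN fa (sized_boundary_inj fN sN).
Qed.

Lemma class_link a : sk_equiv Sfin Kfin (E a) (E (c a)).
Proof.
case: (eqVneq a (c a)) => [<-|hne]; first exact: rst_refl.
have [_ hle] := c_min (sem_eq_refl v (E a)); have [fa _] := E_ok a.
have hst := class_rule_step (fiso_refl (E a)) fa.
case: (ltngtP (kappa (E (c a))) (kappa (E a))) hle => [hlt _|//|heq _].
  by apply: rst_step; left; exists (E a, E (c a)); split=> //; apply/S'_sub/S'_def; right; exists a.
apply: rst_step; right; left; exists (E a, E (c a)); split=> //.
by apply/K'_sub/K'_def; right; exists a; split=> //; split; [exact/eqP | left].
Qed.

(* Without congruences, an Sfin-irreducible copy of E a forces E a to be its
   own representative: otherwise the rule (E a, E (c a)) would apply. *)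
Lemma class_fixed N a :
  (forall r, ~ Kfin r) -> is_framed N -> irreducible Sfin N -> fiso N (E a) -> a = c a.
Proof.
move=> noK fN irrN iso; case: (eqVneq a (c a)) => // hne; exfalso.
have [_ hle] := c_min (sem_eq_refl v (E a)).
case: (ltngtP (kappa (E (c a))) (kappa (E a))) hle => [hlt _|//|heq _].
  apply: irrN; exists (E (c a)), (E a, E (c a)); split.
    by apply/S'_sub/S'_def; right; exists a.
  exact: class_rule_step (fiso_sym iso) fN.
apply: (noK (E a, E (c a))); apply/K'_sub/K'_def; right; exists a.
by split=> //; split; [exact/eqP | left].
Qed.

Lemma run_complete G H :
  is_framed G -> is_framed H -> has_size p G -> has_size p H -> sem_eq v G H ->
  sk_equiv Sfin Kfin G H.
Proof.
move=> fG fH sG sH hGH.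
have [NG hG] := normal_form_exists Sfin_dec G; have [NH hH] := normal_form_exists Sfin_dec H.
have [a [_ isoG seG]] := normal_form_class fG sG hG.
have [b [_ isoH seH]] := normal_form_class fH sH hH.
have [hcab _] := c_min (sem_eq_trans (sem_eq_sym seG) (sem_eq_trans hGH seH)).
have equiv_rep K N x : clos_refl_trans _ (rstep Sfin) K N -> fiso N (E x) ->
    sk_equiv Sfin Kfin K (E (c x)).
  move=> hKN iso; apply: rst_trans (rewrites_sk_equiv _ hKN) _.
  exact: rst_trans (fiso_sk_equiv _ _ iso) (class_link x).
apply: rst_trans (equiv_rep _ _ _ hG.1 isoG) _; rewrite hcab.
exact: rst_sym (equiv_rep _ _ _ hH.1 isoH).
Qed.

Lemma run_normal_forms_iso G H NG NH :
  (forall r, ~ Kfin r) ->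
  is_framed G -> is_framed H -> has_size p G -> has_size p H -> sem_eq v G H ->
  nform Sfin G NG -> nform Sfin H NH -> fiso NG NH.
Proof.
move=> noK fG fH sG sH hGH hG hH.
have [a [fNG isoG seG]] := normal_form_class fG sG hG.
have [b [fNH isoH seH]] := normal_form_class fH sH hH.
have [hcab _] := c_min (sem_eq_trans (sem_eq_sym seG) (sem_eq_trans hGH seH)).
have eab : a = b.
  by rewrite (class_fixed noK fNG hG.2 isoG) (class_fixed noK fNH hH.2 isoH) hcab.
by apply: fiso_trans isoG _; rewrite eab; apply: fiso_sym.
Qed.

End RunAnalysis.

Section Runs.
Variables (T : signature) (R : numClosedFieldType) (v : valuation T R).
Variable kappa : fsgraph T -> nat.

Lemma synth_run_mono p SK SK' :
  synth_run v kappa p SK SK' -> sub_rules SK.1 SK'.1 /\ sub_rules SK.2 SK'.2.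
Proof.
move=> [m [E [c [_ [_ [_ [_ [_ [hS hK]]]]]]]]].
by split=> r hr; [apply/hS | apply/hK]; left.
Qed.

(* A run only adds sound rules: each new rule relates two enumerated graphs
   of equal semantics. *)
Lemma synth_run_sound p SK SK' :
  synth_run v kappa p SK SK' -> sound_rules v SK.1 -> sound_rules v SK.2 ->
  sound_rules v SK'.1 /\ sound_rules v SK'.2.
Proof.
move=> [m [E [c [hE [_ [_ [hsem [_ [hS hK]]]]]]]]] sS sK.
have new_sound a : is_framed (E a) /\ is_framed (E (c a)) /\ sem_eq v (E a) (E (c a)).
  by have [fa _] := hE a; have [fca _] := hE (c a); split=> //; split=> //; apply: hsem.
split=> r.
  by case/hS => [/sS //|[a [_ ->]]]; apply: new_sound.
case/hK => [/sK //|[a [_ [_ [->|->]]]]]; first exact: new_sound.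
by have [fa [fca hs]] := new_sound a; split=> //; split=> //; apply: sem_eq_sym.
Qed.

Lemma chain_sub (A : nat -> ruleset T) n :
  (forall i, i < n -> sub_rules (A i) (A i.+1)) -> forall i, i <= n -> sub_rules (A i) (A n).
Proof.
elim: n => [|n IH] step i; first by rewrite leqn0 => /eqP ->.
rewrite leq_eqVlt => /orP[/eqP -> //|hi] r hr.
apply: (step n (ltnSn n)); apply: IH _ i hi r hr => j hj.
by apply: step; apply: ltnW.
Qed.

Lemma runs_sound n (ps : nat -> nat * nat * nat * nat) (st : nat -> ruleset T * ruleset T) :
  sound_rules v (st 0).1 -> sound_rules v (st 0).2 ->
  (forall i, i < n -> synth_run v kappa (ps i) (st i) (st i.+1)) ->
  sound_rules v (st n).1.
Proof.
move=> sS0 sK0 runs.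
suff: forall i, i <= n -> sound_rules v (st i).1 /\ sound_rules v (st i).2 by case/(_ n (leqnn n)).
elim=> [//|i IH] hi; have [sS sK] := IH (ltnW hi).
exact: synth_run_sound (runs i hi) sS sK.
Qed.

Lemma synth_run_complete p SK SK' (Sfin Kfin : ruleset T) :
  synth_run v kappa p SK SK' -> sub_rules SK'.1 Sfin -> sub_rules SK'.2 Kfin ->
  sound_rules v Sfin -> (forall G H, rstep Sfin G H -> has_size p G -> has_size p H) ->
  (forall G H, rstep Sfin G H -> kappa H < kappa G) ->
  forall G H, is_framed G -> is_framed H -> has_size p G -> has_size p H -> sem_eq v G H ->
  sk_equiv Sfin Kfin G H.
Proof.
move=> [m [E [c [hE [hcov [_ [hsem [hmin [hS hK]]]]]]]]] subS subK sound size_pres dec.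
exact: (run_complete hE hcov hsem hmin hS hK subS subK sound size_pres dec).
Qed.

Lemma synth_run_normal_forms_iso p SK SK' (Sfin Kfin : ruleset T) :
  synth_run v kappa p SK SK' -> sub_rules SK'.1 Sfin -> sub_rules SK'.2 Kfin ->
  sound_rules v Sfin -> (forall G H, rstep Sfin G H -> has_size p G -> has_size p H) ->
  (forall r, ~ Kfin r) ->
  forall G H NG NH, is_framed G -> is_framed H -> has_size p G -> has_size p H ->
  sem_eq v G H -> nform Sfin G NG -> nform Sfin H NH -> fiso NG NH.
Proof.
move=> [m [E [c [hE [hcov [_ [hsem [hmin [hS hK]]]]]]]]] subS subK sound size_pres noK.
move=> G H NG NH.
exact: (run_normal_forms_iso hE hcov hsem hmin hS hK subS subK sound size_pres noK).
Qed.

End Runs.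

Theorem theorem2 (T : signature) (R : numClosedFieldType) (v : valuation T R)
  (kappa : fsgraph T -> nat) (n : nat) (ps : nat -> nat * nat * nat * nat)
  (st : nat -> ruleset T * ruleset T) :
  (* initial reductions: valid rules, sound for the valuation v *)
  (forall r, (st 0).1 r -> valid_rule r /\ sem_eq v r.1 r.2) ->
  (* initially K is empty *)
  (forall r, ~ (st 0).2 r) ->
  (* every generator is irreducible w.r.t. the initial S *)
  (forall G : fsgraph T, is_framed G -> (exists g, giso G (generator g)) ->
     irreducible (st 0).1 G) ->
  (* kappa is invariant under isomorphism *)
  (forall G H, fiso G H -> kappa G = kappa H) ->
  (* kappa strictly decreases along rewriting with all rules ever in S *)
  (forall G H, rstep (st n).1 G H -> kappa H < kappa G) ->
  (* rewriting with S never increases size *)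
  (forall p G H, rstep (st n).1 G H -> has_size p G -> has_size p H) ->
  (* the runs, performed in sequence *)
  (forall i, i < n -> synth_run v kappa (ps i) (st i) (st i.+1)) ->
  (forall i, i < n -> forall G H : fsgraph T,
     is_framed G -> is_framed H -> has_size (ps i) G -> has_size (ps i) H ->
     sem_eq v G H -> sk_equiv (st n).1 (st n).2 G H) /\
  ((forall r, ~ (st n).2 r) ->
   forall i, i < n ->
     (forall G : fsgraph T, is_framed G -> has_size (ps i) G ->
        (exists N, nform (st n).1 G N) /\
        (forall N1 N2, nform (st n).1 G N1 -> nform (st n).1 G N2 -> fiso N1 N2)) /\
     (forall G H : fsgraph T,
        is_framed G -> is_framed H -> has_size (ps i) G -> has_size (ps i) H ->
        sem_eq v G H ->
        forall NG NH, nform (st n).1 G NG -> nform (st n).1 H NH -> fiso NG NH)).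
Proof.
move=> init_S init_K _ _ dec size_pres runs.
have [subS subK] : (forall i, i < n -> sub_rules (st i.+1).1 (st n).1) /\
                   (forall i, i < n -> sub_rules (st i.+1).2 (st n).2).
  have [monoS monoK] : (forall i, i < n -> sub_rules (st i).1 (st i.+1).1) /\
                       (forall i, i < n -> sub_rules (st i).2 (st i.+1).2).
    by split=> i hi; have [] := synth_run_mono (runs i hi).
  by split=> i hi; [apply: chain_sub monoS _ hi | apply: chain_sub monoK _ hi].
have sound : sound_rules v (st n).1.
  apply: runs_sound runs => [r /init_S [[f1 [f2 _]] hs] | r /init_K //].
  by split=> //; split.
split=> [i hi | noK i hi].
  exact: synth_run_complete (runs i hi) (subS i hi) (subK i hi) sound (size_pres _) dec.
have nf_iso := synth_run_normal_forms_iso (runs i hi) (subS i hi) (subK i hi) sound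
  (size_pres _) noK.
split=> [G fG sG | G H fG fH sG sH hGH NG NH]; last exact: nf_iso.
split; first exact: normal_form_exists dec G.
by move=> N1 N2; apply: nf_iso.
Qed.
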